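(* Let $\mathbb{H}^1_2$ be the complexified Heisenberg group. Then $\mathbb{R}^2$ factorizes $\mathbb{H}^1_2$ as a quotient: $\mathbb{R}^2$ is an h-quotient of $\mathbb{H}^1_2$, and every normal homogeneous subgroup $N$ of $\mathbb{H}^1_2$ such that $\mathbb{H}^1_2/N$ is h-isomorphic to $\mathbb{R}^2$ has a complementary homogeneous subgroup.
   Context: $\mathbb{H}^1_2$ is the connected simply connected Lie group whose Lie algebra $\mathfrak{h}^1_2$ has basis $R_0,R_1,R_2,R_3,Z_1,Z_2$ with the only nonzero brackets $[R_0,R_1]=[R_2,R_3]=Z_1$, $[R_0,R_2]=-[R_1,R_3]=Z_2$; it is stratified with first layer $\mathrm{span}\{R_0,\ldots,R_3\}$ and second layer $\mathrm{span}\{Z_1,Z_2\}$; dilations $\delta_r$ act by $r$ on the first layer and $r^2$ on the second. $\mathbb{R}^2$ is the graded group with one layer and dilations $v\mapsto rv$. h-homomorphism: group homomorphism commuting with dilations; h-isomorphism: invertible one. Homogeneous subgroup: closed connected simply connected Lie subgroup invariant under dilations. $\mathbb{R}^2$ is an h-quotient of $\mathbb{H}^1_2$ if $\mathbb{H}^1_2/N$ is h-isomorphic to $\mathbb{R}^2$ for some normal homogeneous subgroup $N$. Homogeneous subgroups $A,B$ are complementary if $AB=\mathbb{H}^1_2$ and $A\cap B=\{e\}$. *)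

From HB Require Import structures.
From mathcomp Require Import all_boot all_order all_algebra.
From mathcomp Require Import all_classical all_reals all_analysis.
Set Implicit Arguments. Unset Strict Implicit. Unset Printing Implicit Defensive.
Import Order.TTheory GRing.Theory Num.Theory.
Import numFieldNormedType.Exports.
Local Open Scope ring_scope.
Local Open Scope classical_set_scope.

(* The complexified Heisenberg group H^1_2 in exponential coordinates:
   a point is (x, z) with x = a0 R0 + a1 R1 + a2 R2 + a3 R3 (first layer)
   and z = z1 Z1 + z2 Z2 (second layer). Since the group has step 2,
   the BCH product is (x,z)*(x',z') = (x+x', z+z' + 1/2 [x,x']). *)
Notation Hpt R := ('rV[R]_4 * 'rV[R]_2)%type.

(* Lie bracket of two first-layer elements, expressed in the basis Z1, Z2:
   [R0,R1]=[R2,R3]=Z1, [R0,R2]=-[R1,R3]=Z2, all other brackets of basis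
   vectors (with i<j) are zero. *)
Definition hbracket (R : realType) (x y : 'rV[R]_4) : 'rV[R]_2 :=
  let a i := x ord0 (inord i) in
  let b i := y ord0 (inord i) in
  \row_(k < 2)
    if k == ord0 then (a 0 * b 1 - a 1 * b 0) + (a 2 * b 3 - a 3 * b 2)
    else (a 0 * b 2 - a 2 * b 0) - (a 1 * b 3 - a 3 * b 1).

Definition hmul (R : realType) (p q : Hpt R) : Hpt R :=
  (p.1 + q.1, p.2 + q.2 + 2^-1 *: hbracket p.1 q.1).
Definition hinv (R : realType) (p : Hpt R) : Hpt R := (- p.1, - p.2).
Definition he (R : realType) : Hpt R := (0, 0).
Definition hdil (R : realType) (r : R) (p : Hpt R) : Hpt R :=
  (r *: p.1, r ^+ 2 *: p.2).

(* Homogeneous subgroup: closed, connected subgroup invariant under all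
   dilations delta_r, r > 0.  (Closed subgroups are Lie subgroups, and
   connected subgroups of a simply connected nilpotent Lie group are simply
   connected.) *)
Definition homogeneous_subgroup (R : realType) (N : set (Hpt R)) : Prop :=
  [/\ closed N, connected N, N (he R),
      (forall p q, N p -> N q -> N (hmul p (hinv q)))
    & (forall r : R, 0 < r -> forall p, N p -> N (hdil r p))].

Definition normal_sub (R : realType) (N : set (Hpt R)) : Prop :=
  forall p n, N n -> N (hmul (hmul p n) (hinv p)).

Definition h_hom_R2 (R : realType) (phi : Hpt R -> 'rV[R]_2) : Prop :=
  (forall p q, phi (hmul p q) = phi p + phi q) /\
  (forall r : R, 0 < r -> forall p, phi (hdil r p) = r *: phi p).

(* H^1_2 / N is h-isomorphic to R^2, expressed via the first isomorphism
   theorem: a surjective h-homomorphism H^1_2 -> R^2 with kernel N. *)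
Definition h_quotient_R2 (R : realType) (N : set (Hpt R)) : Prop :=
  exists phi : Hpt R -> 'rV[R]_2,
    [/\ h_hom_R2 phi, (forall v, exists p, phi p = v)
      & (forall p, N p <-> phi p = 0)].

Definition complementary (R : realType) (A B : set (Hpt R)) : Prop :=
  (forall g, exists a b, [/\ A a, B b & g = hmul a b]) /\
  (forall g, A g -> B g -> g = he R).

From HB Require Import structures.
From mathcomp Require Import all_boot all_order all_algebra.
From mathcomp Require Import all_classical all_reals all_analysis.
From mathcomp Require Import ring lra.
Import GRing.Theory Num.Theory numFieldNormedType.Exports.
Set Implicit Arguments. Unset Strict Implicit. Unset Printing Implicit Defensive.
Local Open Scope ring_scope.
Local Open Scope classical_set_scope.

(* An h-homomorphism onto R^2 kills the centre, since the dilations act on it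
   quadratically, and is therefore given by a linear map x |-> x L of the first
   layer; its kernel is N = {(x, z) | x L = 0}.  The complex structure
   J (a, b, c, d) = (-d, -c, b, a) satisfies [u, J u] = 0, so for every u the
   set {(x, 0) | x in span (u, J u)} is an abelian homogeneous subgroup, and it
   is complementary to N as soon as L is injective on span (u, J u).  The
   quadratic form u |-> det (u L, J u L) cannot vanish at e0, e1, e0 + e1 and
   e0 + e2 all at once: by the Pluecker relation all 2 x 2 minors of L would
   vanish, while the Cauchy-Binet formula gives a nonzero one since L is onto. *)

Lemma sum_ord2 (V : nmodType) (F : 'I_2 -> V) :
  \sum_i F i = F (inord 0) + F (inord 1).
Proof.
rewrite !big_ord_recl big_ord0 addr0.
by congr (F _ + F _); apply: val_inj; rewrite /= inordK.
Qed.

Lemma sum_ord4 (V : nmodType) (F : 'I_4 -> V) :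
  \sum_i F i = F (inord 0) + F (inord 1) + F (inord 2) + F (inord 3).
Proof.
rewrite !big_ord_recl big_ord0 addr0 !addrA.
by congr (F _ + F _ + F _ + F _); apply: val_inj; rewrite /= inordK.
Qed.

Section Minors.
Variable R : comRingType.

Lemma det_mx22 (A : 'M[R]_2) :
  \det A = A (inord 0) (inord 0) * A (inord 1) (inord 1)
         - A (inord 0) (inord 1) * A (inord 1) (inord 0).
Proof.
rewrite (expand_det_row _ (inord 0)) sum_ord2 /cofactor !det_mx11 !mxE.
rewrite !inordK //= expr0 expr1 !mul1r mulN1r mulrN.
by congr (A _ _ * A _ _ - A _ _ * A _ _); apply: val_inj; rewrite /= ?inordK.
Qed.

Definition plucker (L : 'M[R]_(4, 2)) (i j : nat) : R :=
  L (inord i) (inord 0) * L (inord j) (inord 1)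
  - L (inord j) (inord 0) * L (inord i) (inord 1).

Lemma plucker_relation L :
  plucker L 0 1 * plucker L 2 3 - plucker L 0 2 * plucker L 1 3
  + plucker L 0 3 * plucker L 1 2 = 0.
Proof. by rewrite /plucker; ring. Qed.

Lemma cauchy_binet24 (X : 'M[R]_(2, 4)) (L : 'M[R]_(4, 2)) :
  \det (X *m L) =
    plucker X^T 0 1 * plucker L 0 1 + plucker X^T 0 2 * plucker L 0 2
  + plucker X^T 0 3 * plucker L 0 3 + plucker X^T 1 2 * plucker L 1 2
  + plucker X^T 1 3 * plucker L 1 3 + plucker X^T 2 3 * plucker L 2 3.
Proof. by rewrite det_mx22 !mxE !sum_ord4 /plucker !mxE; ring. Qed.

Definition jplane (a b c d : R) : 'M[R]_(2, 4) :=
  \matrix_(i < 2, j < 4)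
    nth 0 (if i == 0 :> nat then [:: a; b; c; d] else [:: - d; - c; b; a]) j.

Lemma det_jplane_mulmx a b c d L :
  \det (jplane a b c d *m L) =
    (b * d - a * c) * (plucker L 0 1 - plucker L 2 3)
  + (a * b + c * d) * (plucker L 0 2 + plucker L 1 3)
  + (a ^+ 2 + d ^+ 2) * plucker L 0 3 + (b ^+ 2 + c ^+ 2) * plucker L 1 2.
Proof. by rewrite det_mx22 !mxE !sum_ord4 !mxE !inordK //= /plucker; ring. Qed.

End Minors.

Lemma jplane_transversal (R : realFieldType) (L : 'M[R]_(4, 2)) :
  row_full L -> exists a b c d, jplane a b c d *m L \in unitmx.
Proof.
case/row_fullP=> X /(congr1 determinant); rewrite det1 cauchy_binet24 => CB.
have PR := plucker_relation L.
suff [a [b [c [d det_neq0]]]] : exists a b c d, \det (jplane a b c d *m L) != 0.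
  by exists a, b, c, d; rewrite unitmxE unitfE.
have [d1|] := eqVneq (\det (jplane 1 0 0 0 *m L)) 0; last by eauto.
have [d2|] := eqVneq (\det (jplane 0 1 0 0 *m L)) 0; last by eauto.
have [d3|] := eqVneq (\det (jplane 1 1 0 0 *m L)) 0; last by eauto.
have [d4|] := eqVneq (\det (jplane 1 0 1 0 *m L)) 0; last by eauto.
exfalso; rewrite !det_jplane_mulmx in d1 d2 d3 d4.
move: CB PR d1 d2 d3 d4.
move: (plucker L 0 1) (plucker L 0 2) (plucker L 0 3) => p01 p02 p03.
move: (plucker L 1 2) (plucker L 1 3) (plucker L 2 3) => p12 p13 p23.
move=> CB PR d1 d2 d3 d4.
have p03_0 : p03 = 0 by lra.
have p12_0 : p12 = 0 by lra.
have p13E : p13 = - p02 by lra.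
have p23E : p23 = p01 by lra.
rewrite p03_0 p12_0 p13E p23E in CB PR.
have p01_0 : p01 = 0 by nra.
have p02_0 : p02 = 0 by nra.
by move: CB; rewrite p01_0 p02_0; lra.
Qed.

Lemma surj_row_full (R : fieldType) m n (L : 'M[R]_(m, n)) :
  (forall v : 'rV_n, exists x, x *m L = v) -> row_full L.
Proof.
move=> L_surj; rewrite -sub1mx; apply/row_subP => i.
have [x <-] := L_surj (row i 1%:M).
exact: submxMl.
Qed.

Section Topology.
Variable R : realFieldType.

Lemma mulmx_continuous m n (A : 'M[R]_(m, n)) :
  continuous (fun x : 'rV[R]_m => x *m A).
Proof.
move=> x; rewrite (_ : (fun y => y *m A) = fun y => \sum_i y 0 i *: row i A).
  apply: continuous_big => [|i _]; first exact: add_continuous.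
  by move=> y; apply: continuousZr_tmp; exact: coord_continuous.
by apply/funext => y; rewrite mulmx_sum_row.
Qed.

Lemma closed_mx_eq (T : topologicalType) m n (f g : T -> 'M[R]_(m, n)) :
  continuous f -> continuous g -> closed [set p | f p = g p].
Proof.
move=> f_cont g_cont.
have -> : [set p | f p = g p] = (fun p => f p - g p) @^-1` [set 0].
  apply/seteqP; split=> p /= => [->|/eqP]; first exact: subrr.
  by rewrite subr_eq0 => /eqP.
have /continuous_closedP : continuous (fun p => f p - g p).
  by move=> p; apply: cvgB; [exact: f_cont | exact: g_cont].
by apply; apply: compact_closed; [exact: norm_hausdorff | exact: compact_set1].
Qed.

Lemma fst_mulmx_continuous n (A : 'M[R]_(4, n)) :
  continuous (fun p : Hpt R => p.1 *m A).
Proof.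
move=> p; apply: (@continuous_comp _ _ _ fst (fun x : 'rV[R]_4 => x *m A)).
  exact: cvg_fst.
exact: mulmx_continuous.
Qed.

End Topology.

Section Heisenberg.
Variable R : realType.

Lemma hpt_star_connected (S : set (Hpt R)) :
  S (0, 0) -> (forall r p, S p -> S (r *: p)) -> connected S.
Proof.
move=> S0 Sr.
have -> : S = \bigcup_(p in S) ((fun r : R => r *: p) @` setT).
  apply/seteqP; split => [p Sp|q [p Sp [r _ <-]]]; last exact: Sr.
  by exists p => //; exists 1 => //; rewrite scale1r.
apply: bigcup_connected => [|p _].
  by exists (0, 0) => p Sp; exists 0 => //; rewrite scale0r.
apply: connected_continuous_connected; first by apply/connected_intervalP.
by move=> r; apply: continuous_subspaceT => {}r; apply: continuousZr_tmp.
Qed.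

Lemma hbracket0r (x : 'rV[R]_4) : hbracket x 0 = 0.
Proof. by apply/rowP => k; rewrite !mxE; case: ifP => _; ring. Qed.

Lemma jplane_abelian (a b c d : R) (u v : 'rV[R]_2) :
  hbracket (u *m jplane a b c d) (v *m jplane a b c d) = 0.
Proof.
by apply/rowP => k; rewrite !mxE !sum_ord2 !mxE !inordK //=; case: ifP => _; ring.
Qed.

Definition hker (L : 'M[R]_(4, 2)) : set (Hpt R) := [set p | p.1 *m L = 0].

Lemma h_hom_R2_mulmx (L : 'M[R]_(4, 2)) : h_hom_R2 (fun p : Hpt R => p.1 *m L).
Proof. by split=> [p q|r _ p]; rewrite /= (mulmxDl, scalemxAl). Qed.

Lemma hker_homogeneous L : homogeneous_subgroup (hker L).
Proof.
split.
- apply: closed_mx_eq; [exact: fst_mulmx_continuous | exact: cst_continuous].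
- apply: hpt_star_connected => [|r p pL]; first exact: mul0mx.
  by rewrite /hker /= -scalemxAl pL scaler0.
- exact: mul0mx.
- by move=> p q pL qL; rewrite /hker /= mulmxDl mulNmx pL qL subrr.
- by move=> r _ p pL; rewrite /hker /= -scalemxAl pL scaler0.
Qed.

Lemma hker_normal L : normal_sub (hker L).
Proof. by move=> p n; rewrite /hker /= addrAC subrr add0r. Qed.

Lemma hker_quotient_R2 L : row_full L -> h_quotient_R2 (hker L).
Proof.
move=> /row_fullP[B BL]; exists (fun p => p.1 *m L); split => //.
  exact: h_hom_R2_mulmx.
by move=> v; exists (v *m B, 0); rewrite /= -mulmxA BL mulmx1.
Qed.

Section HHomLinear.
Variable phi : Hpt R -> 'rV[R]_2.
Hypothesis phi_hom : h_hom_R2 phi.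

Lemma h_hom0 : phi (0, 0) = 0.
Proof.
have := phi_hom.1 (0, 0) (0, 0).
rewrite /hmul /= hbracket0r scaler0 !addr0 -{1}[phi (0, 0)]addr0.
by move/addrI.
Qed.

(* hdil 2 (0, z) = (0, z) ^ 4, so that 2 phi (0, z) = 4 phi (0, z). *)
Lemma h_hom_center (z : 'rV[R]_2) : phi (0, z) = 0.
Proof.
have double w : phi (0, w + w) = phi (0, w) + phi (0, w).
  by rewrite -phi_hom.1 /hmul /= hbracket0r scaler0 !addr0.
have := phi_hom.2 2 (ltr0Sn _ 1) (0, z).
have -> : hdil 2 (0, z) = (0, (z + z) + (z + z)).
  by rewrite /hdil scaler0; congr pair; apply/rowP => k; rewrite !mxE; ring.
rewrite !double scaler_nat mulr2n; set v := phi (0, z).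
rewrite -{3}[v + v]addr0 => /addrI.
by rewrite -mulr2n -scaler_nat => /eqP; rewrite scaler_eq0 pnatr_eq0 => /eqP.
Qed.

Lemma h_hom_fst x z : phi (x, z) = phi (x, 0).
Proof.
have -> : (x, z) = hmul (x, 0) (0, z).
  by rewrite /hmul /= hbracket0r scaler0 !addr0 add0r.
by rewrite phi_hom.1 h_hom_center addr0.
Qed.

Lemma h_hom_fstD x y : phi (x + y, 0) = phi (x, 0) + phi (y, 0).
Proof. by rewrite -phi_hom.1 [RHS]h_hom_fst. Qed.

Lemma h_hom_fstN x : phi (- x, 0) = - phi (x, 0).
Proof. by apply/eqP; rewrite -addr_eq0 -h_hom_fstD addNr h_hom0. Qed.

Lemma h_hom_fstZ r x : phi (r *: x, 0) = r *: phi (x, 0).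
Proof.
have pos s : 0 < s -> phi (s *: x, 0) = s *: phi (x, 0).
  by move=> s_gt0; rewrite -phi_hom.2 // /hdil /= scaler0.
have [r_lt0|r_gt0|->] := ltrgtP r 0; last 2 first.
- exact: pos.
- by rewrite !scale0r h_hom0.
by rewrite -[r]opprK !(scaleNr (- r)) h_hom_fstN pos ?oppr_gt0.
Qed.

Lemma h_hom_mulmx : exists L : 'M[R]_(4, 2), forall p, phi p = p.1 *m L.
Proof.
exists (\matrix_i phi (delta_mx 0 i, 0)) => -[x z] /=.
rewrite h_hom_fst mulmx_sum_row {1}(row_sum_delta x).
rewrite (big_morph (fun x => phi (x, 0)) h_hom_fstD h_hom0).
by apply: eq_bigr => i _; rewrite h_hom_fstZ rowK.
Qed.

End HHomLinear.

Definition hproj (L : 'M[R]_(4, 2)) (W : 'M[R]_(2, 4)) : 'M[R]_4 :=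
  L *m invmx (W *m L) *m W.

(* The subgroup {(x, 0) | x in the row space of W}, written through the
   projection onto that row space along the kernel of L, which makes it
   visibly closed. *)
Definition hcomplement L W : set (Hpt R) :=
  [set p | p.2 = 0 /\ p.1 *m hproj L W = p.1].

Section Complement.
Variables (L : 'M[R]_(4, 2)) (W : 'M[R]_(2, 4)).
Hypothesis WL_unit : W *m L \in unitmx.
Hypothesis W_abelian : forall c d : 'rV[R]_2, hbracket (c *m W) (d *m W) = 0.

Lemma hprojL : hproj L W *m L = L.
Proof. by rewrite /hproj -!mulmxA mulVmx // mulmx1. Qed.

Lemma hproj_idem : hproj L W *m hproj L W = hproj L W.
Proof. by rewrite {1}[hproj L W]/hproj !mulmxA hprojL. Qed.

Lemma hbracket_hproj x y :
  x *m hproj L W = x -> y *m hproj L W = y -> hbracket x y = 0.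
Proof. by move=> <- <-; rewrite /hproj !mulmxA; exact: W_abelian. Qed.

Lemma hcomplement_homogeneous : homogeneous_subgroup (hcomplement L W).
Proof.
split.
- apply: closedI; apply: closed_mx_eq.
  + by move=> p; exact: cvg_snd.
  + exact: cst_continuous.
  + exact: fst_mulmx_continuous.
  + by move=> p; exact: cvg_fst.
- apply: hpt_star_connected => [|r p [p2 pP]]; first by split; rewrite /= ?mul0mx.
  by split; rewrite /= ?p2 ?scaler0 // -scalemxAl pP.
- by split; rewrite /= ?mul0mx.
- move=> p q [p2 pP] [q2 qP]; split; rewrite /= ?mulmxDl ?mulNmx ?pP ?qP //.
  by rewrite hbracket_hproj ?mulNmx ?qP // scaler0 p2 q2 subrr addr0.
- by move=> r _ p [p2 pP]; split; rewrite /= ?p2 ?scaler0 // -scalemxAl pP.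
Qed.

Lemma hker_hcomplement : complementary (hker L) (hcomplement L W).
Proof.
split=> [[x z]|p pL [p2 pP]].
- pose y := x *m hproj L W.
  exists (x - y, z - 2^-1 *: hbracket (x - y) y), (y, 0); split.
  + by rewrite /hker /= mulmxBl -mulmxA hprojL subrr.
  + by split; rewrite //= -mulmxA hproj_idem.
  + by rewrite /hmul /= subrK addr0 subrK.
- move: pP; rewrite /hproj !mulmxA pL !mul0mx => p1.
  by case: p p1 p2 {pL} => /= ? ? <- ->.
Qed.

End Complement.

End Heisenberg.

Theorem proposition11p22 (R : realType) :
  (exists N : set (Hpt R),
      [/\ homogeneous_subgroup N, normal_sub N & h_quotient_R2 N]) /\
  (forall N : set (Hpt R),
      homogeneous_subgroup N -> normal_sub N -> h_quotient_R2 N ->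
      exists M : set (Hpt R), homogeneous_subgroup M /\ complementary N M).
Proof.
split.
  exists (hker (pid_mx 2)); split; [exact: hker_homogeneous | exact: hker_normal |].
  by apply: hker_quotient_R2; rewrite /row_full rank_pid_mx.
move=> N _ _ [phi [phi_hom phi_surj phi_ker]].
have [L phiE] := h_hom_mulmx phi_hom.
have L_full : row_full L.
  by apply: surj_row_full => v; have [p <-] := phi_surj v; exists p.1; rewrite phiE.
have [a [b [c [d WL_unit]]]] := jplane_transversal L_full.
have -> : N = hker L by apply/seteqP; split=> p; rewrite /hker /= -phiE => /phi_ker.
exists (hcomplement L (jplane a b c d)); split; last exact: hker_hcomplement.
by apply: hcomplement_homogeneous => u v; exact: jplane_abelian.
Qed.
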